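(* Let $G$ be a finite group and let $p$ be a prime. Then $G$ does not have a redundant Sylow $p$-subgroup if and only if there exists a $p$-element $x\in G$ that belongs to a unique Sylow $p$-subgroup of $G$.
   Context: For a finite group $G$ and a prime $p$, $G_p$ denotes the set of $p$-elements of $G$ and $\mathrm{Syl}_p(G)$ the set of Sylow $p$-subgroups of $G$. $G$ is said to have a redundant Sylow $p$-subgroup if $G_p$ is contained in the union of the members of some proper subset of $\mathrm{Syl}_p(G)$. *)

From mathcomp Require Import all_boot all_fingroup all_solvable.
Set Implicit Arguments. Unset Strict Implicit. Unset Printing Implicit Defensive.
Local Open Scope group_scope.

Definition p_elts (gT : finGroupType) (p : nat) (G : {set gT}) : {set gT} :=
  [set x in G | p.-elt x].

Definition has_redundant_Sylow (gT : finGroupType) (p : nat) (G : {set gT}) : Prop :=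
  exists S : {set {group gT}},
    S \proper 'Syl_p(G) /\ p_elts p G \subset \bigcup_(P in S) P.

From mathcomp Require Import all_boot all_fingroup all_solvable.
Set Implicit Arguments. Unset Strict Implicit. Unset Printing Implicit Defensive.
Local Open Scope group_scope.

(* Conjugation by g in G maps the Sylow subgroups through x bijectively onto
   those through x ^ g, and every Sylow subgroup is a conjugate of any other.
   So if x lies in a unique Sylow subgroup P, each Sylow subgroup P :^ g is the
   only one containing the p-element x ^ g, and must belong to any cover of G_p.
   Conversely, if every p-element lies in two Sylow subgroups, any single Sylow
   subgroup can be dropped from the cover by all of them. *)

Section SylowsAt.

Variables (gT : finGroupType) (p : nat) (G : {group gT}).

Definition Sylows_at (x : gT) : {set {group gT}} :=
  [set P : {group gT} in 'Syl_p(G) | x \in P].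

Lemma Sylows_at_gt0 x : x \in p_elts p G -> 0 < #|Sylows_at x|.
Proof.
rewrite inE => /andP[xG p_x].
have sxG: <[x]> \subset G by rewrite cycle_subG.
have [P sylP] := Sylow_superset sxG p_x; rewrite cycle_subG => Px.
by apply/card_gt0P; exists P; rewrite !inE sylP.
Qed.

Lemma mem_Sylows_atJ x g (P : {group gT}) :
  g \in G -> (P \in Sylows_at (x ^ g)) = ((P :^ g^-1)%G \in Sylows_at x).
Proof.
by move=> Gg; rewrite !inE /= pHallJ ?groupV // -(memJ_conjg P g^-1) conjgK.
Qed.

Lemma Sylows_atJ1 x g (P R : {group gT}) :
  g \in G -> Sylows_at x = [set P] -> R \in Sylows_at (x ^ g) -> R :=: P :^ g.
Proof.
move=> Gg SylxP; rewrite mem_Sylows_atJ // SylxP inE => /eqP/(congr1 val) /= <-.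
by rewrite conjsgKV.
Qed.

Lemma unique_Sylow_in_cover x (P : {group gT}) (S : {set {group gT}}) :
    x \in p_elts p G -> Sylows_at x = [set P] ->
    S \subset 'Syl_p(G) -> p_elts p G \subset \bigcup_(R in S) R ->
  'Syl_p(G) \subset S.
Proof.
move=> pGx SylxP sSSyl coverS; apply/subsetP=> Q; rewrite inE => sylQ.
have sylP: p.-Sylow(G) P by have:= set11 P; rewrite -SylxP !inE => /andP[].
have [g Gg QPg] := Sylow_trans sylP sylQ.
have pGxg: x ^ g \in p_elts p G.
  by move: pGx; rewrite !inE p_eltJ => /andP[Gx ->]; rewrite groupJ.
have /bigcupP[R SR Rxg] := subsetP coverS _ pGxg.
have /(Sylows_atJ1 Gg SylxP) RPg: R \in Sylows_at (x ^ g).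
  by rewrite inE (subsetP sSSyl R SR).
by have ->: Q = R by apply: val_inj; rewrite /= QPg RPg.
Qed.

Lemma cover_Syl_setD1 (P : {group gT}) :
    (forall x, x \in p_elts p G -> 1 < #|Sylows_at x|) ->
  p_elts p G \subset \bigcup_(Q in 'Syl_p(G) :\ P) Q.
Proof.
move=> Syl_gt1; apply/subsetP=> x /Syl_gt1 /card_gt1P[Q1 [Q2 [SylQ1 SylQ2 neQ]]].
move: SylQ1 SylQ2; rewrite !inE => /andP[sylQ1 xQ1] /andP[sylQ2 xQ2].
have [eQ1P | neQ1P] := eqVneq Q1 P.
  by apply/bigcupP; exists Q2; rewrite // !inE sylQ2 -eQ1P eq_sym neQ.
by apply/bigcupP; exists Q1; rewrite // !inE sylQ1 neQ1P.
Qed.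

End SylowsAt.

Theorem lemma2p1 (gT : finGroupType) (G : {group gT}) (p : nat) (hp : prime p) :
  ~ has_redundant_Sylow p G <->
  exists2 x, x \in p_elts p G & #|[set P : {group gT} in 'Syl_p(G) | x \in P]| = 1%N.
Proof.
split=> [not_redundant | [x pGx /eqP/cards1P[P SylxP]] [S [ltSSyl coverS]]].
  have [/exists_inP[x pGx /eqP] | no_unique] :=
    boolP [exists x in p_elts p G, #|Sylows_at p G x| == 1%N]; first by exists x.
  case: not_redundant; have [P sylP] := Sylow_exists p G.
  exists ('Syl_p(G) :\ P); split; first by rewrite properD1 // inE.
  apply: cover_Syl_setD1 => x pGx; rewrite ltn_neqAle Sylows_at_gt0 // andbT.
  by rewrite eq_sym; apply: contra no_unique => x_unique; apply/exists_inP; exists x.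
have [sSSyl _] := andP ltSSyl.
by rewrite properE (unique_Sylow_in_cover pGx SylxP) ?andbF in ltSSyl.
Qed.
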